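(* Let $P$ be a quantum principal bundle with structure Hopf algebra $H$ (invertible antipode $S$) over $M$, and let $\omega:H\to\Omega^1P$ be a connection. The following are equivalent: (i) $\omega$ is a left strong connection; (ii) $(\Delta_L\otimes\mathrm{id})(\omega(h))=h\otimes1\otimes1-\epsilon(h)1\otimes1\otimes1+h_{(1)}\otimes\omega(h_{(2)})$ for all $h\in H$; (iii) $(\mathrm{id}\otimes\Delta_R)(\omega(h))=1\otimes1\otimes h-\epsilon(h)1\otimes1\otimes1+\omega(h_{(1)})\otimes h_{(2)}$ for all $h\in H$. Moreover, in this case $\bar D=(\mathrm{id}-\bar\Pi_\omega)d$ preserves right strong tensoriality: $(\mathrm{id}-\bar\Pi_\omega)(dp)\in P\,\Omega^1M$ for all $p\in P$.
   Context: $k$ is a field. For a unital algebra $A$, $\Omega^1A=\ker(\mu:A\otimes A\to A)$ with $da=1\otimes a-a\otimes1$; forms are multiplied by concatenation (multiplying adjacent tensor factors). A quantum principal bundle: $H$ a Hopf algebra ($\Delta h=h_{(1)}\otimes h_{(2)}$, counit $\epsilon$, invertible antipode $S$); $P$ a right $H$-comodule algebra with $\Delta_R(p)=p^{(1)}\otimes p^{(2)}$; $M=\{p:\Delta_Rp=p\otimes1\}$; $P$ flat over $M$; $P\otimes_MP\to P\otimes H$, $p\otimes p'\mapsto pp'^{(1)}\otimes p'^{(2)}$ bijective. The associated left coaction of $H^{\rm op}$ on $P$ is $\Delta_L(p)=S^{-1}(p^{(2)})\otimes p^{(1)}$, written $\Delta_L(p)=p^{\tilde{(1)}}\otimes p^{\tilde{(2)}}$.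 In (ii), $\Delta_L$ acts on the first tensor factor of $\omega(h)\in P\otimes P$; in (iii), $\Delta_R$ acts on the second. A connection is a linear $\omega:H\to\Omega^1P\subset P\otimes P$ with $\omega(1)=0$, $\sum\omega_\alpha\omega^\alpha{}^{(1)}\otimes\omega^\alpha{}^{(2)}=1\otimes(h-\epsilon(h)1)$ where $\omega(h)=\sum\omega_\alpha\otimes\omega^\alpha$, and $\Delta_R(\omega(h))=\omega(h_{(2)})\otimes S(h_{(1)})h_{(3)}$ (tensor product coaction on $P\otimes P$). $\Pi_\omega(\sum p\otimes p')=\sum pp'^{(1)}\omega(p'^{(2)})$ and $\bar\Pi_\omega(\sum p\otimes p')=\sum\omega(p^{\tilde{(1)}})p^{\tilde{(2)}}p'$ on $\Omega^1P$. $\omega$ is left strong if $(\mathrm{id}-\Pi_\omega)(dp)\in(\Omega^1M)P$ for all $p\in P$. *)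

(* Tensor products over the field k are represented by
   finite lists of elementary tensors; two lists denote the same tensor iff
   every multilinear form into k takes the same value on them (over a field,
   linear functionals separate the points of V (x) W).  Maps between tensor
   spaces are defined on representatives; they are well defined on tensors
   because the structure maps are assumed linear (with respect to teq). *)
From HB Require Import structures.
From mathcomp Require Import all_boot all_order all_algebra.
Set Implicit Arguments. Unset Strict Implicit. Unset Printing Implicit Defensive.
Import GRing.Theory.
Local Open Scope ring_scope.

Section Tensors.
Variable k : fieldType.

Definition bilinear_form (U V : lmodType k) (f : U -> V -> k) : Prop :=
  (forall (a : k) u1 u2 v, f (a *: u1 + u2) v = a * f u1 v + f u2 v) /\
  (forall (a : k) u v1 v2, f u (a *: v1 + v2) = a * f u v1 + f u v2).

Definition eval2 (U V : Type) (f : U -> V -> k) (t : seq (U * V)) : k :=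
  \sum_(x <- t) f x.1 x.2.

Definition teq2 (U V : lmodType k) (t t' : seq (U * V)) : Prop :=
  forall f : U -> V -> k, bilinear_form f -> eval2 f t = eval2 f t'.

Definition trilinear_form (U V W : lmodType k) (f : U -> V -> W -> k) : Prop :=
  (forall (a : k) u1 u2 v w, f (a *: u1 + u2) v w = a * f u1 v w + f u2 v w) /\
  (forall (a : k) u v1 v2 w, f u (a *: v1 + v2) w = a * f u v1 w + f u v2 w) /\
  (forall (a : k) u v w1 w2, f u v (a *: w1 + w2) = a * f u v w1 + f u v w2).

Definition eval3 (U V W : Type) (f : U -> V -> W -> k) (t : seq (U * V * W)) : k :=
  \sum_(x <- t) f x.1.1 x.1.2 x.2.

Definition teq3 (U V W : lmodType k) (t t' : seq (U * V * W)) : Prop :=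
  forall f : U -> V -> W -> k, trilinear_form f -> eval3 f t = eval3 f t'.

Definition tlinear2 (X U V : lmodType k) (F : X -> seq (U * V)) : Prop :=
  forall (a : k) x y, teq2 (F (a *: x + y))
    ([seq (a *: z.1, z.2) | z <- F x] ++ F y).

Definition klinear (X Y : lmodType k) (f : X -> Y) : Prop :=
  forall (a : k) x y, f (a *: x + y) = a *: f x + f y.

Definition kform (X : lmodType k) (f : X -> k) : Prop :=
  forall (a : k) x y, f (a *: x + y) = a * f x + f y.

Definition tmul (A B : algType k) (s t : seq (A * B)) : seq (A * B) :=
  [seq (x.1 * y.1, x.2 * y.2) | x <- s, y <- t].

End Tensors.

Section Hopf.
Variables (k : fieldType) (H : algType k).
Variables (cop : H -> seq (H * H)) (eps : H -> k) (S : H -> H).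

(* (Delta (x) id) Delta h  and  (id (x) Delta) Delta h, i.e. h1 (x) h2 (x) h3 *)
Definition cop2l (h : H) : seq (H * H * H) :=
  [seq (z.1, z.2, y.2) | y <- cop h, z <- cop y.1].
Definition cop2r (h : H) : seq (H * H * H) :=
  [seq (y.1, z.1, z.2) | y <- cop h, z <- cop y.2].

Definition is_hopf_algebra : Prop :=
  [/\ tlinear2 cop, kform eps & klinear S] /\
  [/\ (forall h, teq3 (cop2l h) (cop2r h)),
      (forall h, \sum_(x <- cop h) eps x.1 *: x.2 = h),
      (forall h, \sum_(x <- cop h) eps x.2 *: x.1 = h),
      (forall g h, teq2 (cop (g * h)) (tmul (cop g) (cop h))) &
      teq2 (cop 1) [:: (1, 1)]] /\
  [/\ (forall g h, eps (g * h) = eps g * eps h), eps 1 = 1,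
      (forall h, \sum_(x <- cop h) S x.1 * x.2 = (eps h)%:A) &
      (forall h, \sum_(x <- cop h) x.1 * S x.2 = (eps h)%:A)].
End Hopf.

Section Bundle.
Variables (k : fieldType) (H P : algType k).
Variables (cop : H -> seq (H * H)) (eps : H -> k) (S Sinv : H -> H).
Variable (coR : P -> seq (P * H)).

Definition is_comodule_algebra : Prop :=
  [/\ tlinear2 coR,
      (forall p, teq3 [seq (z.1, z.2, y.2) | y <- coR p, z <- coR y.1]
                      [seq (y.1, z.1, z.2) | y <- coR p, z <- cop y.2]),
      (forall p, \sum_(x <- coR p) eps x.2 *: x.1 = p),
      (forall p q, teq2 (coR (p * q)) (tmul (coR p) (coR q))) &
      teq2 (coR 1) [:: (1, 1)]].

(* coinvariants M = {p | Delta_R p = p (x) 1} *)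
Definition coinv (p : P) : Prop := teq2 (coR p) [:: (p, 1)].

Definition is_right_Mmodule (V : lmodType k) (act : V -> P -> V) : Prop :=
  [/\ (forall v, act v 1 = v),
      (forall v m m', coinv m -> coinv m' -> act (act v m) m' = act v (m * m')),
      (forall (a : k) v w m, coinv m -> act (a *: v + w) m = a *: act v m + act w m) &
      (forall (a : k) v m m', coinv m -> coinv m' ->
          act v (a *: m + m') = a *: act v m + act v m')].

Definition is_submodule (V : lmodType k) (act : V -> P -> V) (N : V -> Prop) : Prop :=
  [/\ N 0, (forall (a : k) v w, N v -> N w -> N (a *: v + w)) &
      (forall v m, N v -> coinv m -> N (act v m))].

Definition zero_in_VMP (V : lmodType k) (act : V -> P -> V) (t : seq (V * P)) : Prop :=
  forall f : V -> P -> k, bilinear_form f ->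
    (forall v m p, coinv m -> f (act v m) p = f v (m * p)) -> eval2 f t = 0.

(* t = 0 in N (x)_M P (forms on N (x)_M P = balanced bilinear forms on N x P) *)
Definition zero_in_NMP (V : lmodType k) (act : V -> P -> V) (N : V -> Prop)
    (t : seq (V * P)) : Prop :=
  forall f : V -> P -> k,
    (forall (a : k) u1 u2 v, N u1 -> N u2 -> f (a *: u1 + u2) v = a * f u1 v + f u2 v) ->
    (forall (a : k) u v1 v2, N u -> f u (a *: v1 + v2) = a * f u v1 + f u v2) ->
    (forall v m p, N v -> coinv m -> f (act v m) p = f v (m * p)) ->
    eval2 f t = 0.

(* P flat as a left M-module: - (x)_M P preserves injections of right M-modules *)
Definition left_flat_over_M : Prop :=
  forall (V : lmodType k) (act : V -> P -> V) (N : V -> Prop),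
    is_right_Mmodule act -> is_submodule act N ->
    forall t : seq (V * P), (forall x, x \in t -> N x.1) ->
      zero_in_VMP act t -> zero_in_NMP act N t.

Definition zero_in_PMP (t : seq (P * P)) : Prop :=
  forall f : P -> P -> k, bilinear_form f ->
    (forall p m q, coinv m -> f (p * m) q = f p (m * q)) -> eval2 f t = 0.

Definition can (t : seq (P * P)) : seq (P * H) :=
  [seq (x.1 * y.1, y.2) | x <- t, y <- coR x.2].

Definition is_qpb : Prop :=
  [/\ is_hopf_algebra cop eps S, cancel S Sinv & cancel Sinv S] /\
  [/\ is_comodule_algebra, left_flat_over_M,
      (* can : P (x)_M P -> P (x) H bijective *)
      (forall u : seq (P * H), exists t, teq2 (can t) u) &
      (forall t, teq2 (can t) [::] -> zero_in_PMP t)].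

(* universal calculus *)
Definition in_Omega1 (t : seq (P * P)) : Prop := \sum_(x <- t) x.1 * x.2 = 0.
Definition dP (p : P) : seq (P * P) := [:: (1, p); (- p, 1)].

(* (Omega^1 M) P and P (Omega^1 M), as subspaces of Omega^1 P in P (x) P *)
Definition in_Omega1M (xi : seq (P * P)) : Prop :=
  (forall x, x \in xi -> coinv x.1 /\ coinv x.2) /\ in_Omega1 xi.

Definition in_Omega1M_P (t : seq (P * P)) : Prop :=
  exists s : seq (seq (P * P) * P),
    (forall x, x \in s -> in_Omega1M x.1) /\
    teq2 t [seq (a.1, a.2 * x.2) | x <- s, a <- x.1].

Definition in_P_Omega1M (t : seq (P * P)) : Prop :=
  exists s : seq (P * seq (P * P)),
    (forall x, x \in s -> in_Omega1M x.2) /\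
    teq2 t [seq (x.1 * a.1, a.2) | x <- s, a <- x.2].

Variable omega : H -> seq (P * P).

Definition coL (p : P) : seq (H * P) := [seq (Sinv y.2, y.1) | y <- coR p].

Definition coR2 (t : seq (P * P)) : seq (P * P * H) :=
  flatten [seq [seq (a.1, b.1, a.2 * b.2) | a <- coR x.1, b <- coR x.2] | x : P * P <- t].

Definition is_connection : Prop :=
  [/\ tlinear2 omega,
      teq2 (omega 1) [::],
      (forall h, in_Omega1 (omega h)),
      (forall h, teq2 (can (omega h)) [:: (1, h); (1, - (eps h)%:A)]) &
      (forall h, teq3 (coR2 (omega h))
         [seq (z.1, z.2, S y.1.1 * y.2) | y <- cop2l cop h, z <- omega y.1.2])].

Definition Pi (t : seq (P * P)) : seq (P * P) :=
  flatten [seq [seq (x.1 * a.1 * z.1, z.2) | a <- coR x.2, z <- omega a.2] | x : P * P <- t].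

Definition Pibar (t : seq (P * P)) : seq (P * P) :=
  flatten [seq [seq (z.1, z.2 * a.2 * x.2) | a : H * P <- coL x.1, z : P * P <- omega a.1] | x : P * P <- t].

Definition idminus (F : seq (P * P) -> seq (P * P)) (t : seq (P * P)) :=
  t ++ [seq (- z.1, z.2) | z <- F t].

Definition left_strong : Prop := forall p, in_Omega1M_P (idminus Pi (dP p)).

Definition right_strong_bar : Prop := forall p, in_P_Omega1M (idminus Pibar (dP p)).

Definition cond_ii : Prop := forall h,
  teq3 [seq (a.1, a.2, x.2) | x <- omega h, a <- coL x.1]
       ([:: (h, 1, 1); (- (eps h)%:A, 1, 1)] ++
        [seq (y.1, z.1, z.2) | y <- cop h, z <- omega y.2]).

Definition cond_iii : Prop := forall h,
  teq3 [seq (x.1, a.1, a.2) | x <- omega h, a <- coR x.2]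
       ([:: (1, 1, h); (1, 1, - (eps h)%:A)] ++
        [seq (z.1, z.2, y.2) | y <- cop h, z <- omega y.1]).

End Bundle.

(* The key input from linear algebra is that
   [- (x) P] is exact over a field: a tensor [T] in [P (x) P] with
   [(Delta_R (x) id) T = T_1 (x) 1 (x) T_2] can be rewritten with coinvariant
   left legs.  So [omega] is left strong iff [D p = (id - Pi_omega) dp] has
   this invariance for all [p].  Applying the tensor product coaction to
   [D p] and using the equivariance of [omega] turns left strongness into
   (iii), first on the image of the canonical map, which is all of [P (x) H].
   Both (ii) and (iii) give a formula for [Delta_R] on the left legs of
   [omega h] (for (ii) after applying [S]), from which the invariance of [D p]
   is a direct computation.  The same computation for [Pibar_omega], using
   (iii) and the anti-comultiplicativity of [S^-1], shows that
   [(id - Pibar_omega) dp] has coinvariant right legs. *)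

From HB Require Import structures.
From mathcomp Require Import all_boot all_order all_algebra.
From mathcomp Require Import ring.
From mathcomp Require Import boolp classical_sets.
Set Implicit Arguments. Unset Strict Implicit. Unset Printing Implicit Defensive.
Import GRing.Theory.
Local Open Scope ring_scope.

(** * Linear forms and tensors *)

Section LinearForms.
Variable k : fieldType.

Section OneSpace.
Variable U : lmodType k.
Implicit Types f : U -> k.

Lemma kform0 f : kform f -> f 0 = 0.
Proof.
move=> Hf; have := Hf 1 0 0; rewrite scale1r addr0 mul1r.
by move/(congr1 (fun z => z - f 0)); rewrite subrr addrK.
Qed.

Lemma kformD f : kform f -> forall x y, f (x + y) = f x + f y.
Proof. by move=> Hf x y; rewrite -{1}[x]scale1r Hf mul1r. Qed.

Lemma kformZ f : kform f -> forall a x, f (a *: x) = a * f x.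
Proof. by move=> Hf a x; rewrite -[a *: x]addr0 Hf kform0 // addr0. Qed.

Lemma kformN f : kform f -> forall x, f (- x) = - f x.
Proof. by move=> Hf x; rewrite -scaleN1r kformZ // mulN1r. Qed.

Lemma kformB f : kform f -> forall x y, f (x - y) = f x - f y.
Proof. by move=> Hf x y; rewrite kformD // kformN. Qed.

Lemma kform_sum f (I : Type) (s : seq I) (F : I -> U) :
  kform f -> f (\sum_(i <- s) F i) = \sum_(i <- s) f (F i).
Proof.
move=> Hf; elim: s => [|a s IH]; first by rewrite !big_nil kform0.
by rewrite !big_cons kformD // IH.
Qed.

Lemma kform_sumf (I : Type) (s : seq I) (B : I -> U -> k) :
  (forall i, kform (B i)) -> kform (fun x => \sum_(i <- s) B i x).
Proof.
move=> HB a x y; rewrite mulr_sumr -big_split /=.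
by apply: eq_bigr => i _; rewrite HB.
Qed.

Lemma kform_mull c f : kform f -> kform (fun x => c * f x).
Proof. by move=> Hf a x y; rewrite Hf; ring. Qed.

Lemma kform_mulr c f : kform f -> kform (fun x => f x * c).
Proof. by move=> Hf a x y; rewrite Hf; ring. Qed.

End OneSpace.

Lemma kform_comp (X Y : lmodType k) (L : X -> Y) (f : Y -> k) :
  klinear L -> kform f -> kform (fun x => f (L x)).
Proof. by move=> HL Hf a x y; rewrite HL Hf. Qed.

Lemma klinear_id (X : lmodType k) : klinear (fun x : X => x).
Proof. by []. Qed.

Lemma klinear_comp (X Y Z : lmodType k) (L : X -> Y) (M : Y -> Z) :
  klinear M -> klinear L -> klinear (fun x => M (L x)).
Proof. by move=> HM HL a x y; rewrite HL HM. Qed.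

Lemma klinear_mulr (A : algType k) (X : lmodType k) (L : X -> A) (c : A) :
  klinear L -> klinear (fun x => L x * c).
Proof. by move=> HL a x y; rewrite HL mulrDl scalerAl. Qed.

Lemma klinear_mull (A : algType k) (X : lmodType k) (L : X -> A) (c : A) :
  klinear L -> klinear (fun x => c * L x).
Proof. by move=> HL a x y; rewrite HL mulrDr scalerAr. Qed.

Lemma klinear_opp (X Y : lmodType k) (L : X -> Y) : klinear L -> klinear (fun x => - L x).
Proof. by move=> HL a x y; rewrite HL opprD scalerN. Qed.

Lemma klinear0 (X Y : lmodType k) (L : X -> Y) : klinear L -> L 0 = 0.
Proof.
move=> HL; have := HL 1 0 0; rewrite !scale1r addr0.
by move/(congr1 (fun z => z - L 0)); rewrite subrr addrK.
Qed.

Lemma klinearZ (X Y : lmodType k) (L : X -> Y) a x : klinear L -> L (a *: x) = a *: L x.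
Proof. by move=> HL; rewrite -[a *: x]addr0 HL klinear0 // addr0. Qed.

Lemma klinear_sum (X Y : lmodType k) (L : X -> Y) (I : Type) (s : seq I) (F : I -> X) :
  klinear L -> L (\sum_(i <- s) F i) = \sum_(i <- s) L (F i).
Proof.
move=> HL; elim: s => [|a s IH]; first by rewrite !big_nil klinear0.
by rewrite !big_cons -IH -{1}[F a]scale1r HL scale1r.
Qed.

Definition bilin (U V : lmodType k) (f : U -> V -> k) :=
  (forall v, kform (fun u => f u v)) /\ (forall u, kform (f u)).

Definition trilin (U V W : lmodType k) (f : U -> V -> W -> k) :=
  [/\ forall v w, kform (fun u => f u v w), forall u w, kform (fun v => f u v w)
    & forall u v, kform (f u v)].

Lemma bilinP (U V : lmodType k) (f : U -> V -> k) : bilin f <-> bilinear_form f.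
Proof. by split=> [[H1 H2]|[H1 H2]]; split=> *; rewrite ?H1 ?H2. Qed.

Lemma trilinP (U V W : lmodType k) (f : U -> V -> W -> k) : trilin f <-> trilinear_form f.
Proof.
by split=> [[H1 H2 H3]|[H1 [H2 H3]]]; [split; [|split]|split]=> *; rewrite ?H1 ?H2 ?H3.
Qed.

Lemma bilin_kform1 (U V X : lmodType k) (f : U -> V -> k) (L : X -> U) v :
  bilin f -> klinear L -> kform (fun x => f (L x) v).
Proof. by move=> [H1 _] HL; apply: kform_comp HL (H1 v). Qed.

Lemma bilin_kform2 (U V X : lmodType k) (f : U -> V -> k) (L : X -> V) u :
  bilin f -> klinear L -> kform (fun x => f u (L x)).
Proof. by move=> [_ H2] HL; apply: kform_comp HL (H2 u). Qed.

Lemma trilin_kform1 (U V W X : lmodType k) (f : U -> V -> W -> k) (L : X -> U) v w :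
  trilin f -> klinear L -> kform (fun x => f (L x) v w).
Proof. by move=> [H1 _ _] HL; apply: kform_comp HL (H1 v w). Qed.

Lemma trilin_kform2 (U V W X : lmodType k) (f : U -> V -> W -> k) (L : X -> V) u w :
  trilin f -> klinear L -> kform (fun x => f u (L x) w).
Proof. by move=> [_ H2 _] HL; apply: kform_comp HL (H2 u w). Qed.

Lemma trilin_kform3 (U V W X : lmodType k) (f : U -> V -> W -> k) (L : X -> W) u v :
  trilin f -> klinear L -> kform (fun x => f u v (L x)).
Proof. by move=> [_ _ H3] HL; apply: kform_comp HL (H3 u v). Qed.

Lemma teq2P (U V : lmodType k) (t t' : seq (U * V)) :
  teq2 t t' <->
  (forall B : U -> V -> k, bilin B -> \sum_(a <- t) B a.1 a.2 = \sum_(a <- t') B a.1 a.2).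
Proof. by split=> Ht f /bilinP; apply: Ht. Qed.

Lemma teq2E (U V : lmodType k) (t t' : seq (U * V)) (B : U -> V -> k) :
  teq2 t t' -> bilin B -> \sum_(a <- t) B a.1 a.2 = \sum_(a <- t') B a.1 a.2.
Proof. by move/teq2P; apply. Qed.

Lemma teq3E (U V W : lmodType k) (t t' : seq (U * V * W)) (B : U -> V -> W -> k) :
  teq3 t t' -> trilin B -> \sum_(a <- t) B a.1.1 a.1.2 a.2 = \sum_(a <- t') B a.1.1 a.1.2 a.2.
Proof. by move=> Ht /trilinP; apply: Ht. Qed.

Lemma tlinear2_kform (X U V : lmodType k) (F : X -> seq (U * V)) (B : U * V -> k) :
  tlinear2 F -> (forall v, kform (fun u => B (u, v))) -> (forall u, kform (fun v => B (u, v))) ->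
  kform (fun x => \sum_(a <- F x) B a).
Proof.
move=> HF H1 H2 a x y.
have pairE t : \sum_(z <- t) B z = \sum_(z <- t) (fun u v => B (u, v)) z.1 z.2.
  by apply: eq_bigr => -[].
rewrite !pairE (teq2E (B := fun u v => B (u, v)) (HF a x y)) /=; last by split.
rewrite big_cat big_map /= mulr_sumr; congr (_ + _); apply: eq_bigr => -[u v] _ /=.
by rewrite (kformZ (H1 v)).
Qed.

Lemma tlinear2_kform_comp (X Y U V : lmodType k) (F : Y -> seq (U * V)) (L : X -> Y)
    (B : U * V -> k) :
  tlinear2 F -> klinear L ->
  (forall v, kform (fun u => B (u, v))) -> (forall u, kform (fun v => B (u, v))) ->
  kform (fun x => \sum_(a <- F (L x)) B a).
Proof.
move=> HF HL H1 H2; apply: (kform_comp (f := fun y => \sum_(a <- F y) B a) HL).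
exact: tlinear2_kform.
Qed.

End LinearForms.

Arguments bilin_kform1 {k U V X f L v}.
Arguments bilin_kform2 {k U V X f L u}.
Arguments trilin_kform1 {k U V W X f L v w}.
Arguments trilin_kform2 {k U V W X f L u w}.
Arguments trilin_kform3 {k U V W X f L u v}.
Arguments klinear_mulr {k A X L c}.
Arguments klinear_mull {k A X L c}.

(* Discharges the side conditions [kform _] and [klinear _] produced by
   testing tensor identities against multilinear forms built from the
   structure maps. *)
Ltac klinearity :=
  repeat first
  [ exact: klinear_id
  | apply: klinear_mulr
  | apply: klinear_mull
  | apply: klinear_opp
  | match goal with H : klinear _ |- klinear _ => apply: (klinear_comp H) end ]
with linearity :=
  repeat (first
  [ match goal with |- forall _, _ => intro end
  | progress (cbn [fst snd])
  | apply: kform_sumf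
  | apply: kform_mull
  | apply: kform_mulr
  | match goal with H : tlinear2 _ |- _ => apply: (tlinear2_kform_comp H); [klinearity| |] end
  | match goal with H : trilin _ |- _ =>
      first [apply: (trilin_kform1 H) | apply: (trilin_kform2 H) | apply: (trilin_kform3 H)];
      klinearity end
  | match goal with H : bilin _ |- _ =>
      first [apply: (bilin_kform1 H) | apply: (bilin_kform2 H)]; klinearity end
  | match goal with H : kform _ |- _ => apply: (kform_comp _ H); klinearity end
  ]).

Ltac beta_rewrite L := let E := fresh "E" in have E := L; cbn beta in E; rewrite E; clear E.
Ltac beta_rewrite_r L := let E := fresh "E" in have E := L; cbn beta in E; rewrite -E; clear E.

(** * Linear forms separate points *)

Section Separation.
Variables (k : fieldType) (V : lmodType k).
Local Open Scope classical_set_scope.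

Definition linear_graph (A : set (V * k)) :=
  (forall c x a y b, A (x, a) -> A (y, b) -> A (c *: x + y, c * a + b)) /\
  (forall x a b, A (x, a) -> A (x, b) -> a = b).

Lemma linear_graph_bigcup (F : set (set (V * k))) :
  (forall A, F A -> linear_graph A) -> total_on F subset ->
  linear_graph (\bigcup_(A in F) A).
Proof.
move=> lgF totF.
have common z1 z2 : (\bigcup_(A in F) A) z1 -> (\bigcup_(A in F) A) z2 ->
    exists2 A, F A & A z1 /\ A z2.
  move=> [A1 FA1 A1z1] [A2 FA2 A2z2].
  have [s12|s21] := totF _ _ FA1 FA2; first by exists A2 => //; split=> //; apply: s12.
  by exists A1 => //; split=> //; apply: s21.
split.
- move=> c x a y b Ux Uy; have [A FA [Ax Ay]] := common _ _ Ux Uy.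
  by exists A => //; apply: (lgF A FA).1.
- move=> x a b Ua Ub; have [A FA [Aa Ab]] := common _ _ Ua Ub.
  exact: (lgF A FA).2 _ _ _ Aa Ab.
Qed.

Definition adjoin (A : set (V * k)) (v : V) : set (V * k) :=
  [set z | exists x a c, A (x, a) /\ z = (x + c *: v, a)].

Lemma sub_adjoin A v : A `<=` adjoin A v.
Proof. by move=> [x a] Axa; exists x, a, 0; rewrite scale0r addr0. Qed.

Lemma linear_graph_adjoin A v :
  linear_graph A -> A (0, 0) -> (forall a, ~ A (v, a)) -> linear_graph (adjoin A v).
Proof.
move=> [clA fuA] A00 nAv; split.
  move=> c x a y b [x1 [a1 [c1 [A1 [-> ->]]]]] [x2 [a2 [c2 [A2 [-> ->]]]]].
  exists (c *: x1 + x2), (c * a1 + a2), (c * c1 + c2); split; first exact: clA.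
  by congr (_, _); rewrite scalerDr scalerDl scalerA addrACA.
move=> x a b [x1 [a1 [c1 [A1 [-> ->]]]]] [x2 [a2 [c2 [A2 [E ->]]]]].
have [ec|nc] := eqVneq c1 c2.
  by move: E; rewrite ec => /addIr E; rewrite E in A1; exact: fuA A1 A2.
have nc' : c1 - c2 != 0 by rewrite subr_eq0.
exfalso; apply: (nAv ((c1 - c2)^-1 * (a2 - a1))).
have -> : v = (c1 - c2)^-1 *: (x2 - x1).
  apply/eqP; rewrite -(inj_eq (scalerI nc')) scalerA mulfV // scale1r scalerBl.
  have -> : x2 = x1 + c1 *: v - c2 *: v by rewrite E addrK.
  by rewrite addrAC (addrC x1) addrK.
have := clA (c1 - c2)^-1 _ _ _ _ (clA (-1) _ _ _ _ A1 A2) A00.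
by rewrite !addr0 scaleN1r mulN1r !(addrC (- _)).
Qed.

(* Zorn's lemma is applied to the linear graphs that contain [A0] as soon as
   they are nonempty, so that the union of the empty chain qualifies. *)
Lemma kform_extension (A0 : set (V * k)) :
  linear_graph A0 -> A0 (0, 0) -> exists phi, kform phi /\ forall x a, A0 (x, a) -> phi x = a.
Proof.
move=> lgA0 A000.
pose P (B : set (V * k)) := linear_graph B /\ forall z, B z -> A0 `<=` B.
have [A [[[clA fuA] A0A] Amax]] : exists A, P A /\ forall B, A `<` B -> ~ P B.
  apply: Zorn_bigcup => F FP Ftot; split.
    by apply: linear_graph_bigcup => // A /FP [].
  move=> z [B FB Bz] y /(FP B FB).2 - /(_ z Bz) By.
  by exists B.
have sA0 : A0 `<=` A.
  have [[z Az]|nA] := pselect (exists z, A z); first exact: A0A Az.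
  exfalso; apply: (Amax A0); last by split=> // z _.
  split=> [z Az|sub]; first by case: nA; exists z.
  by apply: nA; exists (0, 0); apply: sub.
have tot v : exists a, A (v, a).
  apply: contrapT => nv.
  have nAv a : ~ A (v, a) by move=> Ava; apply: nv; exists a.
  apply: (Amax (adjoin A v)).
    split=> [|/(_ (v, 0)) sub]; first exact: sub_adjoin.
    apply: (nAv 0); apply: sub; exists 0, 0, 1.
    by rewrite scale1r add0r; split=> //; apply: sA0.
  split; first exact: linear_graph_adjoin (conj clA fuA) (sA0 _ A000) nAv.
  by move=> z _ y A0y; apply: sub_adjoin; apply: sA0.
pose phi v := projT1 (cid (tot v)); have phiP v : A (v, phi v) := projT2 (cid (tot v)).
exists phi; split; first by move=> a x y; apply: fuA (phiP _) (clA _ _ _ _ _ (phiP x) (phiP y)).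
by move=> x a A0xa; apply: fuA (phiP x) (sA0 _ A0xa).
Qed.

Definition in_span (w : V) (ys : seq V) :=
  exists f : nat -> k, w = \sum_(i < size ys) f i *: ys`_i.

Definition span_graph (w : V) (ys : seq V) : set (V * k) :=
  [set z | exists f : nat -> k, z.1 = z.2 *: w + \sum_(i < size ys) f i *: ys`_i].

Lemma linear_graph_span w ys : ~ in_span w ys -> linear_graph (span_graph w ys).
Proof.
move=> nsp; split.
  move=> c x a y b [f /= ->] [g /= ->]; exists (fun i => c * f i + g i) => /=.
  rewrite scalerDr addrACA scalerA -scalerDl; congr (_ + _).
  rewrite scaler_sumr -big_split /=; apply: eq_bigr => i _.
  by rewrite scalerA -scalerDl.
move=> x a b [f /= ->] [g /= Eg]; have [//|nab] := eqVneq a b; exfalso; apply: nsp.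
have nab' : a - b != 0 by rewrite subr_eq0.
exists (fun i => (g i - f i) / (a - b)).
have : (a - b) *: w = \sum_(i < size ys) (g i - f i) *: ys`_i.
  rewrite scalerBl -[a *: w](addrK (\sum_(i < size ys) f i *: ys`_i)) Eg.
  under [RHS]eq_bigr do rewrite scalerBl.
  by rewrite sumrB (addrC (b *: w)) addrAC addrK.
move/(congr1 (fun z => (a - b)^-1 *: z)); rewrite scalerA mulVf // scale1r => ->.
rewrite scaler_sumr; apply: eq_bigr => i _; rewrite scalerA; congr (_ *: _).
by rewrite mulrC.
Qed.

Lemma kform_off_span w ys : ~ in_span w ys ->
  exists phi, [/\ kform phi, phi w = 1 & forall i, (i < size ys)%N -> phi ys`_i = 0].
Proof.
move=> nsp; have zero_in : span_graph w ys (0, 0).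
  by exists (fun _ => 0); rewrite /= scale0r add0r big1 // => i _; rewrite scale0r.
have [phi [lphi Ephi]] := kform_extension (linear_graph_span nsp) zero_in.
exists phi; split=> //.
  apply: Ephi; exists (fun _ => 0) => /=.
  by rewrite scale1r big1 ?addr0 // => i _; rewrite scale0r.
move=> j Hj; apply: Ephi; exists (fun i => (i == j)%:R) => /=; rewrite scale0r add0r.
rewrite (bigD1 (Ordinal Hj)) //= eqxx scale1r big1 ?addr0 // => i.
by rewrite -(inj_eq val_inj) /= => /negPf ->; rewrite scale0r.
Qed.

Lemma kform_separates (x : V) : x != 0 -> exists phi, kform phi /\ phi x = 1.
Proof.
move=> nx; have [|phi [? ? _]] := @kform_off_span x [::]; last by exists phi.
by case=> f; rewrite big_ord0; apply/eqP.
Qed.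

Lemma eq_by_kforms (x y : V) : (forall phi, kform phi -> phi x = phi y) -> x = y.
Proof.
move=> Hp; apply/eqP; rewrite -subr_eq0; apply/negPn/negP => /kform_separates [phi [Hl H1]].
by move: H1; rewrite kformB // Hp // subrr => /eqP; rewrite eq_sym oner_eq0.
Qed.

End Separation.

Lemma teq2_bilinear_map (k : fieldType) (U V W : lmodType k) (m : U -> V -> W)
    (t t' : seq (U * V)) :
  (forall v, klinear (fun u => m u v)) -> (forall u, klinear (m u)) -> teq2 t t' ->
  \sum_(a <- t) m a.1 a.2 = \sum_(a <- t') m a.1 a.2.
Proof.
move=> H1 H2 Ht; apply: eq_by_kforms => phi Hphi; rewrite !kform_sum //.
by apply: (teq2E (B := fun u v => phi (m u v)) Ht); split=> ?; apply: kform_comp.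
Qed.

Lemma teq2_in_Omega1 (k : fieldType) (A : algType k) (t s : seq (A * A)) :
  teq2 t s -> in_Omega1 t -> in_Omega1 s.
Proof.
move=> ts; rewrite /in_Omega1 (teq2_bilinear_map (m := fun a b => a * b) _ _ ts) //.
- by move=> v; klinearity.
- by move=> u; klinearity.
Qed.

(** * Invariant tensors over a field *)

Section InvariantLegs.
Variables (k : fieldType) (V W X : lmodType k) (rho : V -> seq (V * X)) (u : X).
Hypothesis rho_lin : tlinear2 rho.

Definition invariant_vector (v : V) :=
  forall B : V -> X -> k, bilin B -> \sum_(a <- rho v) B a.1 a.2 = B v u.

Definition invariant_tensor (T : seq (V * W)) :=
  forall B : V -> X -> W -> k, trilin B ->
    \sum_(t <- T) \sum_(a <- rho t.1) B a.1 a.2 t.2 = \sum_(t <- T) B t.1 u t.2.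

Lemma teq2_invariant_tensor T T' : teq2 T T' -> invariant_tensor T -> invariant_tensor T'.
Proof.
move=> TT' HT B HB; have [B1 B2 B3] := HB.
rewrite -(teq2E (B := fun a c => \sum_(b <- rho a) B b.1 b.2 c) TT'); last by split; linearity.
rewrite -(teq2E (B := fun a c => B a u c) TT'); last by split; linearity.
exact: HT.
Qed.

Lemma absorb_dependent_leg v w (T : seq (V * W)) : in_span w (map snd T) ->
  exists2 T', size T' = size T & teq2 ((v, w) :: T) T'.
Proof.
rewrite /in_span size_map => -[f Ew]; exists (mkseq (fun i => ((nth (0, 0) T i).1 + f i *: v, (nth (0, 0) T i).2)) (size T)).
  exact: size_mkseq.
apply/teq2P => B [B1 B2]; rewrite big_cons /= Ew (kform_sum _ _ (B2 v)).
rewrite (big_nth (0, 0)) big_mkord /mkseq big_map.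
have -> : iota 0 (size T) = index_iota 0 (size T) by rewrite /index_iota subn0.
rewrite big_mkord -big_split /=; apply: eq_bigr => i _.
by rewrite (kformD (B1 _)) (kformZ (B2 _)) (kformZ (B1 _)) addrC (nth_map (0, 0)).
Qed.

Lemma independent_leg_invariant v w T : ~ in_span w (map snd T) ->
  invariant_tensor ((v, w) :: T) -> invariant_vector v /\ invariant_tensor T.
Proof.
move=> nsp Hinv; have [phi [Hphi phiw phiT]] := kform_off_span nsp.
have phi0 t : t \in T -> phi t.2 = 0.
  move=> tT; have := phiT (index t T); rewrite size_map index_mem => /(_ tT).
  by rewrite (nth_map t) ?index_mem // nth_index.
have inv_v : invariant_vector v.
  move=> B [B1 B2]; have := Hinv (fun a b c => B a b * phi c).
  rewrite !big_cons /= phiw mulr1.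
  have -> : \sum_(t <- T) \sum_(a <- rho t.1) B a.1 a.2 * phi t.2 = 0.
    by rewrite big_seq big1 // => t tT; rewrite -mulr_suml phi0 ?mulr0.
  have -> : \sum_(t <- T) B t.1 u * phi t.2 = 0.
    by rewrite big_seq big1 // => t tT; rewrite phi0 ?mulr0.
  by rewrite !addr0 -mulr_suml mulr1; apply; split; linearity.
split=> // B HB; have [B1 B2 B3] := HB.
have := Hinv B HB; rewrite !big_cons /= (inv_v (fun a b => B a b w)); first by move/addrI.
by split; linearity.
Qed.

(* Over a field, [- (x) W] is exact, so the [rho]-invariant part of
   [V (x) W] is the image of [V^rho (x) W]: by induction on the length of [T],
   a second leg depending on the others is absorbed into them, and an
   independent one is detected by a functional vanishing on the others. *)
Lemma invariant_tensor_legs T : invariant_tensor T ->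
  exists s, (forall x, x \in s -> invariant_vector x.1) /\ teq2 T s.
Proof.
move Hn : (size T) => n; elim: n T Hn => [|n IH] T.
  by move/size0nil => -> _; exists [::].
case: T => [|[v w] T] //= [Hn] Hinv.
have [dep|nsp] := pselect (in_span w (map snd T)).
  have [T' ET' TT'] := absorb_dependent_leg v dep.
  have [s [Hs Ts]] := IH T' (etrans ET' Hn) (teq2_invariant_tensor TT' Hinv).
  by exists s; split=> // f Hf; rewrite TT' // Ts.
have [inv_v invT] := independent_leg_invariant nsp Hinv.
have [s [Hs Ts]] := IH T Hn invT.
exists ((v, w) :: s); split; first by move=> x; rewrite inE => /predU1P [->|/Hs].
by apply/teq2P => B HB; rewrite !big_cons (teq2E Ts HB).
Qed.

End InvariantLegs.

(** * Hopf algebras *)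

Section HopfAlgebra.
Local Unset Implicit Arguments.
Variables (k : fieldType) (H : algType k).
Variables (cop : H -> seq (H * H)) (eps : H -> k) (S Sinv : H -> H).

Hypothesis cop_lin : tlinear2 cop.
Hypothesis eps_lin : kform eps.
Hypothesis S_lin : klinear S.
Hypothesis coassoc : forall h, teq3 (cop2l cop h) (cop2r cop h).
Hypothesis counitL : forall h, \sum_(x <- cop h) eps x.1 *: x.2 = h.
Hypothesis counitR : forall h, \sum_(x <- cop h) eps x.2 *: x.1 = h.
Hypothesis copM : forall g h, teq2 (cop (g * h)) (tmul (cop g) (cop h)).
Hypothesis cop1 : teq2 (cop 1) [:: (1, 1)].
Hypothesis epsM : forall g h, eps (g * h) = eps g * eps h.
Hypothesis eps1 : eps 1 = 1.
Hypothesis antipodeL : forall h, \sum_(x <- cop h) S x.1 * x.2 = (eps h)%:A.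
Hypothesis antipodeR : forall h, \sum_(x <- cop h) x.1 * S x.2 = (eps h)%:A.
Hypothesis SK : cancel S Sinv.
Hypothesis KS : cancel Sinv S.

Lemma coassoc_sum (B : H -> H -> H -> k) h : trilin B ->
  \sum_(y <- cop h) \sum_(z <- cop y.1) B z.1 z.2 y.2 =
  \sum_(y <- cop h) \sum_(z <- cop y.2) B y.1 z.1 z.2.
Proof.
move=> HB; have := teq3E (coassoc h) HB.
by rewrite /cop2l /cop2r !big_allpairs_dep.
Qed.

Lemma counitL_sum (F : H -> k) h : kform F -> \sum_(x <- cop h) eps x.1 * F x.2 = F h.
Proof.
by move=> HF; rewrite -{2}(counitL h) kform_sum //; apply: eq_bigr => x _; rewrite kformZ.
Qed.

Lemma counitR_sum (F : H -> k) h : kform F -> \sum_(x <- cop h) eps x.2 * F x.1 = F h.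
Proof.
by move=> HF; rewrite -{2}(counitR h) kform_sum //; apply: eq_bigr => x _; rewrite kformZ.
Qed.

Lemma copM_sum (B : H -> H -> k) g h : bilin B ->
  \sum_(x <- cop (g * h)) B x.1 x.2 =
  \sum_(x <- cop g) \sum_(y <- cop h) B (x.1 * y.1) (x.2 * y.2).
Proof. by move=> HB; rewrite (teq2E (copM g h) HB) /tmul big_allpairs_dep. Qed.

Lemma cop1_sum (B : H -> H -> k) : bilin B -> \sum_(x <- cop 1) B x.1 x.2 = B 1 1.
Proof. by move=> HB; rewrite (teq2E cop1 HB) big_seq1. Qed.

Lemma antipodeL_sum (F : H -> k) h : kform F -> \sum_(y <- cop h) F (S y.1 * y.2) = eps h * F 1.
Proof. by move=> HF; rewrite -kform_sum // antipodeL kformZ. Qed.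

Lemma antipodeR_sum (F : H -> k) h : kform F -> \sum_(y <- cop h) F (y.1 * S y.2) = eps h * F 1.
Proof. by move=> HF; rewrite -kform_sum // antipodeR kformZ. Qed.

Lemma Sinv_lin : klinear Sinv.
Proof. by move=> a x y; apply: (can_inj SK); rewrite S_lin !KS. Qed.

Lemma antipode1 : S 1 = 1.
Proof.
have := antipodeL 1; rewrite eps1 scale1r.
rewrite (teq2_bilinear_map (m := fun a b => S a * b) _ _ cop1) ?big_seq1 ?mulr1 //.
- by move=> v; klinearity.
- by move=> u; klinearity.
Qed.

Lemma antipode_inv1 : Sinv 1 = 1.
Proof. by rewrite -{1}antipode1 SK. Qed.

Lemma eps_antipode h : eps (S h) = eps h.
Proof.
have := congr1 eps (antipodeL h).
rewrite kform_sum // -[(eps h)%:A]addr0 eps_lin kform0 // eps1 addr0 mulr1 => <-.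
rewrite -(counitR_sum (fun g => eps (S g))); last by linearity.
by apply: eq_bigr => x _; rewrite epsM mulrC.
Qed.

Lemma eps_antipode_inv h : eps (Sinv h) = eps h.
Proof. by rewrite -{2}(KS h) eps_antipode. Qed.

Lemma antipodeN_alg (c : k) : S (- c%:A) = - c%:A.
Proof. by rewrite -scaleNr klinearZ // antipode1. Qed.

Lemma antipodeM_expand (F : H -> k) g h : kform F ->
  \sum_(x <- cop g) \sum_(x' <- cop x.2) \sum_(y <- cop h) \sum_(y' <- cop y.2)
    F (S (x.1 * y.1) * (x'.1 * y'.1) * (S y'.2 * S x'.2)) = F (S (g * h)).
Proof.
move=> HF.
transitivity (\sum_(x <- cop g) \sum_(x' <- cop x.2) \sum_(y <- cop h)
    eps y.2 * F (S (x.1 * y.1) * (x'.1 * S x'.2))).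
  apply: eq_bigr => x _; apply: eq_bigr => x' _; apply: eq_bigr => y _.
  rewrite -[in RHS](mulr1 x'.1).
  beta_rewrite_r (antipodeR_sum (fun c => F (S (x.1 * y.1) * (x'.1 * c * S x'.2)))); last by linearity.
  by apply: eq_bigr => y' _; rewrite !mulrA.
transitivity (\sum_(x <- cop g) \sum_(x' <- cop x.2) F (S (x.1 * h) * (x'.1 * S x'.2))).
  apply: eq_bigr => x _; apply: eq_bigr => x' _.
  by beta_rewrite (counitR_sum (fun c => F (S (x.1 * c) * (x'.1 * S x'.2)))); linearity.
transitivity (\sum_(x <- cop g) eps x.2 * F (S (x.1 * h) * 1)).
  apply: eq_bigr => x _.
  by beta_rewrite (antipodeR_sum (fun c => F (S (x.1 * h) * c))); linearity.
by beta_rewrite (counitR_sum (fun c => F (S (c * h) * 1))); rewrite ?mulr1 //; linearity.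
Qed.

Lemma antipodeM_collapse (F : H -> k) g h : kform F ->
  \sum_(x <- cop g) \sum_(x' <- cop x.2) \sum_(y <- cop h) \sum_(y' <- cop y.2)
    F (S (x.1 * y.1) * (x'.1 * y'.1) * (S y'.2 * S x'.2)) = F (S h * S g).
Proof.
move=> HF.
rewrite -(coassoc_sum (fun a b c => \sum_(y <- cop h) \sum_(y' <- cop y.2)
   F (S (a * y.1) * (b * y'.1) * (S y'.2 * S c))) g); last by split; linearity.
transitivity (\sum_(x <- cop g) \sum_(u <- cop x.1) \sum_(y <- cop h) \sum_(v <- cop y.1)
   F (S (u.1 * v.1) * (u.2 * v.2) * (S y.2 * S x.2))).
  apply: eq_bigr => x _; apply: eq_bigr => u _.
  rewrite -(coassoc_sum (fun a b c => F (S (u.1 * a) * (u.2 * b) * (S c * S x.2))) h) //.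
  by split; linearity.
transitivity (\sum_(x <- cop g) \sum_(y <- cop h) eps x.1 * (eps y.1 * F (S y.2 * S x.2))).
  apply: eq_bigr => x _; rewrite exchange_big; apply: eq_bigr => y _.
  beta_rewrite_r (copM_sum (fun a b => F (S a * b * (S y.2 * S x.2)))); last by split; linearity.
  beta_rewrite (antipodeL_sum (fun c => F (c * (S y.2 * S x.2)))); last by linearity.
  by rewrite epsM mul1r mulrA.
transitivity (\sum_(x <- cop g) eps x.1 * F (S h * S x.2)).
  apply: eq_bigr => x _; rewrite -mulr_sumr.
  by beta_rewrite (counitL_sum (fun c => F (S c * S x.2))); linearity.
by beta_rewrite (counitL_sum (fun c => F (S h * S c))); linearity.
Qed.

Lemma antipodeM g h : S (g * h) = S h * S g.
Proof.
apply: eq_by_kforms => phi Hphi.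
by rewrite -(antipodeM_expand phi g h Hphi) (antipodeM_collapse phi g h Hphi).
Qed.

Lemma antipode_inv_sum h : \sum_(e <- cop h) Sinv e.2 * e.1 = (eps h)%:A.
Proof.
apply: (can_inj SK); rewrite klinear_sum //.
rewrite (eq_bigr (fun e => S e.1 * e.2)); last by move=> e _; rewrite antipodeM KS.
by rewrite antipodeL klinearZ // antipode1.
Qed.

Lemma counit_antipodeR_sum (K : H -> H -> k) z : bilin K ->
  \sum_(b <- cop z) \sum_(c <- cop b.1) \sum_(d <- cop c.2) K (c.1 * S b.2) (d.1 * S d.2) =
  eps z * K 1 1.
Proof.
move=> HK.
transitivity (\sum_(b <- cop z) \sum_(c <- cop b.1) eps c.2 * K (c.1 * S b.2) 1).
  apply: eq_bigr => b _; apply: eq_bigr => c _.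
  by beta_rewrite (antipodeR_sum (fun u => K (c.1 * S b.2) u)); linearity.
transitivity (\sum_(b <- cop z) K (b.1 * S b.2) 1).
  apply: eq_bigr => b _.
  by beta_rewrite (counitR_sum (fun u => K (u * S b.2) 1)); linearity.
by beta_rewrite (antipodeR_sum (fun u => K u 1)); linearity.
Qed.

Lemma cop_antipode_expand (B : H -> H -> k) h : bilin B ->
  \sum_(e <- cop (S h)) B e.1 e.2 =
  \sum_(a <- cop h) \sum_(b <- cop a.2) \sum_(c <- cop b.2)
    \sum_(f <- cop (S a.1 * b.1)) B (f.1 * S c.2) (f.2 * S c.1).
Proof.
move=> HB.
transitivity (\sum_(a <- cop h) eps a.2 * \sum_(e <- cop (S a.1)) B e.1 e.2).
  by beta_rewrite (counitR_sum (fun g => \sum_(e <- cop (S g)) B e.1 e.2)); linearity.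
transitivity (\sum_(a <- cop h) \sum_(b <- cop a.2) \sum_(c <- cop b.1) \sum_(d <- cop c.2)
   \sum_(e <- cop (S a.1)) B (e.1 * (c.1 * S b.2)) (e.2 * (d.1 * S d.2))).
  apply: eq_bigr => a _.
  beta_rewrite (counit_antipodeR_sum (fun u v => \sum_(e <- cop (S a.1)) B (e.1 * u) (e.2 * v)));
    last by split; linearity.
  by congr (_ * _); apply: eq_bigr => e _; rewrite !mulr1.
transitivity (\sum_(a <- cop h) \sum_(b <- cop a.2) \sum_(c <- cop b.1) \sum_(d <- cop c.1)
   \sum_(e <- cop (S a.1)) B (e.1 * (d.1 * S b.2)) (e.2 * (d.2 * S c.2))).
  apply: eq_bigr => a _; apply: eq_bigr => b _.
  rewrite -(coassoc_sum (fun x y z => \sum_(e <- cop (S a.1))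
    B (e.1 * (x * S b.2)) (e.2 * (y * S z))) b.1) //; split; linearity.
transitivity (\sum_(a <- cop h) \sum_(b <- cop a.2) \sum_(c <- cop b.1)
   \sum_(f <- cop (S a.1 * c.1)) B (f.1 * S b.2) (f.2 * S c.2)).
  apply: eq_bigr => a _; apply: eq_bigr => b _; apply: eq_bigr => c _.
  beta_rewrite (copM_sum (fun u v => B (u * S b.2) (v * S c.2))); last by split; linearity.
  rewrite exchange_big; apply: eq_bigr => d _; apply: eq_bigr => e _.
  by rewrite !mulrA.
apply: eq_bigr => a _.
by rewrite (coassoc_sum (fun x y z => \sum_(f <- cop (S a.1 * x)) B (f.1 * S z) (f.2 * S y)) a.2) //;
  split; linearity.
Qed.

Lemma cop_antipode (B : H -> H -> k) h : bilin B ->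
  \sum_(e <- cop (S h)) B e.1 e.2 = \sum_(e <- cop h) B (S e.2) (S e.1).
Proof.
move=> HB; rewrite cop_antipode_expand //.
rewrite -(coassoc_sum (fun x y z => \sum_(c <- cop z) \sum_(f <- cop (S x * y))
  B (f.1 * S c.2) (f.2 * S c.1)) h); last by split; linearity.
transitivity (\sum_(a <- cop h) eps a.1 * \sum_(c <- cop a.2) B (S c.2) (S c.1)).
  apply: eq_bigr => a _; rewrite exchange_big mulr_sumr; apply: eq_bigr => c _.
  beta_rewrite (antipodeL_sum (fun g => \sum_(f <- cop g) B (f.1 * S c.2) (f.2 * S c.1)));
    last by linearity.
  by beta_rewrite (cop1_sum (fun u v => B (u * S c.2) (v * S c.1))); rewrite ?mul1r //;
    split; linearity.
by beta_rewrite (counitL_sum (fun g => \sum_(c <- cop g) B (S c.2) (S c.1))); linearity.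
Qed.

Lemma cop_antipode_inv (B : H -> H -> k) h : bilin B ->
  \sum_(e <- cop (Sinv h)) B e.1 e.2 = \sum_(e <- cop h) B (Sinv e.2) (Sinv e.1).
Proof.
move=> HB; have Sinv_lin := Sinv_lin.
rewrite -{2}[h]KS (cop_antipode (fun u v => B (Sinv v) (Sinv u))); last by split; linearity.
by apply: eq_bigr => e _; rewrite !SK.
Qed.

(** * Strong connections *)

Section Bundle.
Variable P : algType k.
Variable coR : P -> seq (P * H).
Variable omega : H -> seq (P * P).

Hypothesis coR_lin : tlinear2 coR.
Hypothesis coR_coassoc : forall p,
  teq3 [seq (z.1, z.2, y.2) | y <- coR p, z <- coR y.1]
       [seq (y.1, z.1, z.2) | y <- coR p, z <- cop y.2].
Hypothesis coR_counit : forall p, \sum_(x <- coR p) eps x.2 *: x.1 = p.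
Hypothesis coRM : forall p q, teq2 (coR (p * q)) (tmul (coR p) (coR q)).
Hypothesis coR1 : teq2 (coR 1) [:: (1, 1)].
Hypothesis omega_lin : tlinear2 omega.
Hypothesis omega1 : teq2 (omega 1) [::].
Hypothesis omega_Omega1 : forall h, in_Omega1 (omega h).
Hypothesis omega_equivariant : forall h,
  teq3 (coR2 coR (omega h))
       [seq (z.1, z.2, S y.1.1 * y.2) | y <- cop2l cop h, z <- omega y.1.2].

Lemma coR_coassoc_sum (B : P -> H -> H -> k) p : trilin B ->
  \sum_(y <- coR p) \sum_(z <- coR y.1) B z.1 z.2 y.2 =
  \sum_(y <- coR p) \sum_(z <- cop y.2) B y.1 z.1 z.2.
Proof. by move=> HB; have := teq3E (coR_coassoc p) HB; rewrite !big_allpairs_dep. Qed.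

Lemma coR_counit_sum (F : P -> k) p : kform F -> \sum_(x <- coR p) eps x.2 * F x.1 = F p.
Proof.
by move=> HF; rewrite -{2}(coR_counit p) kform_sum //; apply: eq_bigr => x _; rewrite kformZ.
Qed.

Lemma coRM_sum (B : P -> H -> k) p q : bilin B ->
  \sum_(x <- coR (p * q)) B x.1 x.2 =
  \sum_(x <- coR p) \sum_(y <- coR q) B (x.1 * y.1) (x.2 * y.2).
Proof. by move=> HB; rewrite (teq2E (coRM p q) HB) /tmul big_allpairs_dep. Qed.

Lemma coR1_sum (B : P -> H -> k) : bilin B -> \sum_(x <- coR 1) B x.1 x.2 = B 1 1.
Proof. by move=> HB; rewrite (teq2E coR1 HB) big_seq1. Qed.

Lemma omega1_sum (B : P -> P -> k) : bilin B -> \sum_(x <- omega 1) B x.1 x.2 = 0.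
Proof. by move=> HB; rewrite (teq2E omega1 HB) big_nil. Qed.

Lemma omega_equivariant_sum (B : P -> P -> H -> k) h : trilin B ->
  \sum_(x <- omega h) \sum_(a <- coR x.1) \sum_(b <- coR x.2) B a.1 b.1 (a.2 * b.2) =
  \sum_(y <- cop h) \sum_(u <- cop y.1) \sum_(z <- omega u.2) B z.1 z.2 (S u.1 * y.2).
Proof.
move=> HB; have := teq3E (omega_equivariant h) HB.
rewrite /coR2 /cop2l !big_allpairs_dep big_flatten big_map /=.
by under eq_bigr do rewrite big_allpairs_dep.
Qed.

Lemma coinvP q :
  coinv coR q <-> forall B : P -> H -> k, bilin B -> \sum_(a <- coR q) B a.1 a.2 = B q 1.
Proof.
split=> [Hq B HB | Hq f /bilinP Hf]; last by rewrite /eval2 big_seq1; apply: Hq.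
by rewrite (teq2E Hq HB) big_seq1.
Qed.

Lemma coinvN q : coinv coR q -> coinv coR (- q).
Proof.
move=> /coinvP Hq; apply/coinvP => B HB; have [B1 B2] := HB.
pose F x := \sum_(a <- coR x) B a.1 a.2.
have HF : kform F by rewrite /F; linearity.
by transitivity (F (- q)); rewrite // (kformN HF) /F Hq // (kformN (B1 _)).
Qed.

(* [m (x) p = (m (x) 1 - 1 (x) m) p + 1 (x) m p], and the last terms add up to
   [1 (x) 0] when the tensor lies in [Omega^1 P]. *)
Lemma in_Omega1M_P_of_coinv (T s : seq (P * P)) :
  (forall x, x \in s -> coinv coR x.1) -> teq2 T s -> in_Omega1 T -> in_Omega1M_P coR T.
Proof.
move=> Hs Ts T0; have s0 := teq2_in_Omega1 Ts T0.
exists [seq ([:: (m.1, 1); (1, - m.1)], m.2) | m <- s]; split.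
  move=> x /mapP [m ms ->] /=; split; last first.
    by rewrite /in_Omega1 big_cons big_seq1 /= mulr1 mul1r subrr.
  move=> y; rewrite !inE => /orP [/eqP -> | /eqP ->] /=; split.
  - exact: Hs.
  - exact: coR1.
  - exact: coR1.
  - exact/coinvN/Hs.
move=> f Hf; rewrite (Ts f Hf); move: f Hf; apply/teq2P => B [B1 B2].
rewrite big_allpairs_dep big_map.
transitivity (\sum_(m <- s) B m.1 m.2 + B 1 (- \sum_(m <- s) m.1 * m.2)).
  by rewrite s0 oppr0 (kform0 (B2 _)) addr0.
rewrite (kformN (B2 _)) (kform_sum _ _ (B2 _)) -sumrN -big_split /=.
by apply: eq_bigr => m _; rewrite big_cons big_seq1 /= mul1r mulNr (kformN (B2 _)).
Qed.

Lemma in_P_Omega1M_of_coinv (T s : seq (P * P)) :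
  (forall x, x \in s -> coinv coR x.2) -> teq2 T s -> in_Omega1 T -> in_P_Omega1M coR T.
Proof.
move=> Hs Ts T0; have s0 := teq2_in_Omega1 Ts T0.
exists [seq (m.1, [:: (1, m.2); (- m.2, 1)]) | m <- s]; split.
  move=> x /mapP [m ms ->] /=; split; last first.
    by rewrite /in_Omega1 big_cons big_seq1 /= mulr1 mul1r subrr.
  move=> y; rewrite !inE => /orP [/eqP -> | /eqP ->] /=; split.
  - exact: coR1.
  - exact: Hs.
  - exact/coinvN/Hs.
  - exact: coR1.
move=> f Hf; rewrite (Ts f Hf); move: f Hf; apply/teq2P => B [B1 B2].
rewrite big_allpairs_dep big_map.
transitivity (\sum_(m <- s) B m.1 m.2 + B (- \sum_(m <- s) m.1 * m.2) 1).
  by rewrite s0 oppr0 (kform0 (B1 _)) addr0.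
rewrite (kformN (B1 _)) (kform_sum _ _ (B1 _)) -sumrN -big_split /=.
by apply: eq_bigr => m _; rewrite big_cons big_seq1 /= mulr1 mulrN (kformN (B1 _)).
Qed.

Definition Dcov p := idminus (Pi coR omega) (dP p).
Definition Dcovbar p := idminus (Pibar Sinv coR omega) (dP p).

Lemma Dcov_sum (B : P -> P -> k) p : bilin B ->
  \sum_(t <- Dcov p) B t.1 t.2 =
  B 1 p - B p 1 - \sum_(a <- coR p) \sum_(z <- omega a.2) B (a.1 * z.1) z.2.
Proof.
move=> HB; have [B1 B2] := HB.
rewrite /Dcov /idminus big_cat big_map /dP /Pi big_flatten big_map !big_cons !big_nil /=.
rewrite !big_allpairs_dep !addr0 (kformN (B1 _)).
have -> : \sum_(a <- coR 1) \sum_(b <- omega a.2) B (- (- p * a.1 * b.1)) b.2 = 0.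
  beta_rewrite (coR1_sum (fun u g => \sum_(b <- omega g) B (- (- p * u * b.1)) b.2));
    last by split; linearity.
  by beta_rewrite (omega1_sum (fun u v => B (- (- p * 1 * u)) v)); split; linearity.
rewrite addr0 -sumrN; congr (_ + _); apply: eq_bigr => a _; rewrite -sumrN.
by apply: eq_bigr => z _; rewrite mul1r (kformN (B1 _)).
Qed.

Lemma Dcovbar_sum (B : P -> P -> k) p : bilin B ->
  \sum_(t <- Dcovbar p) B t.1 t.2 =
  B 1 p - B p 1 + \sum_(y <- coR p) \sum_(z <- omega (Sinv y.2)) B z.1 (z.2 * y.1).
Proof.
move=> HB; have [B1 B2] := HB; have Sinv_lin := Sinv_lin.
rewrite /Dcovbar /idminus big_cat big_map /dP /Pibar big_flatten big_map !big_cons !big_nil /=.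
rewrite !big_allpairs_dep /coL !big_map !addr0 (kformN (B1 _)).
have -> : \sum_(y <- coR 1) \sum_(b <- omega (Sinv y.2)) B (- b.1) (b.2 * y.1 * p) = 0.
  beta_rewrite (coR1_sum (fun u g => \sum_(b <- omega (Sinv g)) B (- b.1) (b.2 * u * p)));
    last by split; linearity.
  rewrite antipode_inv1.
  by beta_rewrite (omega1_sum (fun u v => B (- u) (v * 1 * p))); split; linearity.
rewrite add0r; congr (_ + _).
pose F q := \sum_(y <- coR q) \sum_(b <- omega (Sinv y.2)) B (- b.1) (b.2 * y.1 * 1).
have HF : kform F by rewrite /F; linearity.
transitivity (F (- p)); first by [].
rewrite (kformN HF) /F -sumrN; apply: eq_bigr => y _; rewrite -sumrN.
by apply: eq_bigr => z _; rewrite mulr1 (kformN (B1 _)) opprK.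
Qed.

Lemma Dcov_in_Omega1 p : in_Omega1 (Dcov p).
Proof.
rewrite /in_Omega1 /Dcov /idminus big_cat big_map /dP /Pi big_flatten big_map /=.
rewrite [X in _ + X = _]big1 ?addr0; first by rewrite !big_cons big_nil /= mul1r mulr1 addr0 subrr.
move=> x _; rewrite big_allpairs_dep; apply: big1 => a _.
transitivity (- (x.1 * a.1 * \sum_(z <- omega a.2) z.1 * z.2)).
  by rewrite mulr_sumr -sumrN; apply: eq_bigr => z _; rewrite mulNr mulrA.
by rewrite omega_Omega1 mulr0 oppr0.
Qed.

Lemma Dcovbar_in_Omega1 p : in_Omega1 (Dcovbar p).
Proof.
rewrite /in_Omega1 /Dcovbar /idminus big_cat big_map /dP /Pibar big_flatten big_map /=.
rewrite [X in _ + X = _]big1 ?addr0; first by rewrite !big_cons big_nil /= mul1r mulr1 addr0 subrr.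
move=> x _; rewrite big_allpairs_dep; apply: big1 => a _.
transitivity (- ((\sum_(z <- omega a.1) z.1 * z.2) * a.2 * x.2)).
  by rewrite !mulr_suml -sumrN; apply: eq_bigr => z _; rewrite mulNr !mulrA.
by rewrite omega_Omega1 !mul0r oppr0.
Qed.

Definition cond_iii_at h := forall G : P -> P -> H -> k, trilin G ->
  \sum_(x <- omega h) \sum_(a <- coR x.2) G x.1 a.1 a.2 =
  G 1 1 h + G 1 1 (- (eps h)%:A) + \sum_(y <- cop h) \sum_(z <- omega y.1) G z.1 z.2 y.2.

Definition cond_ii_at h := forall G : H -> P -> P -> k, trilin G ->
  \sum_(x <- omega h) \sum_(y <- coR x.1) G (Sinv y.2) y.1 x.2 =
  G h 1 1 + G (- (eps h)%:A) 1 1 + \sum_(y <- cop h) \sum_(z <- omega y.2) G y.1 z.1 z.2.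

(* Condition (ii) transported through [S], with the [H]-leg placed last. *)
Definition left_coaction_at h := forall G : P -> P -> H -> k, trilin G ->
  \sum_(x <- omega h) \sum_(a <- coR x.1) G a.1 x.2 a.2 =
  G 1 1 (S h) + G 1 1 (S (- (eps h)%:A)) +
  \sum_(y <- cop h) \sum_(z <- omega y.2) G z.1 z.2 (S y.1).

Lemma cond_iiP : cond_ii cop eps Sinv coR omega <-> forall h, cond_ii_at h.
Proof.
have EL h (F : H -> P -> P -> k) :
    eval3 F [seq (a.1, a.2, x.2) | x <- omega h, a <- coL Sinv coR x.1] =
    \sum_(x <- omega h) \sum_(y <- coR x.1) F (Sinv y.2) y.1 x.2.
  by rewrite /eval3 big_allpairs_dep; apply: eq_bigr => x _; rewrite /coL big_map.
have ER h (F : H -> P -> P -> k) :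
    eval3 F ([:: (h, 1, 1); (- (eps h)%:A, 1, 1)] ++
             [seq (y.1, z.1, z.2) | y <- cop h, z <- omega y.2]) =
    F h 1 1 + F (- (eps h)%:A) 1 1 + \sum_(y <- cop h) \sum_(z <- omega y.2) F y.1 z.1 z.2.
  by rewrite /eval3 big_cat big_allpairs_dep !big_cons big_nil /= addr0.
split=> Hc h F HF; last by rewrite EL ER; apply/Hc/trilinP.
by have := Hc h F (proj1 (trilinP F) HF); rewrite EL ER.
Qed.

Lemma cond_iiiP : cond_iii cop eps coR omega <-> forall h, cond_iii_at h.
Proof.
have EL h (F : P -> P -> H -> k) :
    eval3 F [seq (x.1, a.1, a.2) | x <- omega h, a <- coR x.2] =
    \sum_(x <- omega h) \sum_(a <- coR x.2) F x.1 a.1 a.2.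
  by rewrite /eval3 big_allpairs_dep.
have ER h (F : P -> P -> H -> k) :
    eval3 F ([:: (1, 1, h); (1, 1, - (eps h)%:A)] ++
             [seq (z.1, z.2, y.2) | y <- cop h, z <- omega y.1]) =
    F 1 1 h + F 1 1 (- (eps h)%:A) + \sum_(y <- cop h) \sum_(z <- omega y.1) F z.1 z.2 y.2.
  by rewrite /eval3 big_cat big_allpairs_dep !big_cons big_nil /= addr0.
split=> Hc h F HF; last by rewrite EL ER; apply/Hc/trilinP.
by have := Hc h F (proj1 (trilinP F) HF); rewrite EL ER.
Qed.

Lemma coR_antipodeR_sum (F : P -> H -> k) p : bilin F ->
  \sum_(a <- coR p) \sum_(e <- cop a.2) F a.1 (e.1 * S e.2) = F p 1.
Proof.
move=> HF; transitivity (\sum_(a <- coR p) eps a.2 * F a.1 1).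
  by apply: eq_bigr => a _; beta_rewrite (antipodeR_sum (fun c => F a.1 c)); linearity.
by beta_rewrite (coR_counit_sum (fun u => F u 1)); linearity.
Qed.

Lemma coR_antipode_sum (F : P -> H -> k) q : bilin F ->
  \sum_(b <- coR q) \sum_(d <- coR b.1) F d.1 (d.2 * S b.2) = F q 1.
Proof.
move=> HF; rewrite (coR_coassoc_sum (fun u g1 g2 => F u (g1 * S g2))); last by split; linearity.
exact: coR_antipodeR_sum.
Qed.

Lemma omega_equivariant_antipode_sum (G : P -> P -> H -> k) h : trilin G ->
  \sum_(y <- cop h) \sum_(z <- omega y.1) \sum_(a <- coR z.1) \sum_(d <- coR z.2)
    G a.1 d.1 (a.2 * (d.2 * S y.2)) =
  \sum_(y <- cop h) \sum_(z <- omega y.2) G z.1 z.2 (S y.1).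
Proof.
move=> HG.
transitivity (\sum_(y <- cop h) \sum_(w <- cop y.1) \sum_(u <- cop w.1) \sum_(z <- omega u.2)
    G z.1 z.2 (S u.1 * w.2 * S y.2)).
  apply: eq_bigr => y _.
  transitivity (\sum_(z <- omega y.1) \sum_(a <- coR z.1) \sum_(d <- coR z.2)
      G a.1 d.1 (a.2 * d.2 * S y.2)).
    by do 3! (apply: eq_bigr => ? _); rewrite mulrA.
  by beta_rewrite (omega_equivariant_sum (fun u v g => G u v (g * S y.2))); split; linearity.
rewrite (coassoc_sum (fun a b c => \sum_(u <- cop a) \sum_(z <- omega u.2)
  G z.1 z.2 (S u.1 * b * S c)) h); last by split; linearity.
transitivity (\sum_(y <- cop h) eps y.2 * \sum_(u <- cop y.1) \sum_(z <- omega u.2)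
    G z.1 z.2 (S u.1 * 1)).
  apply: eq_bigr => y _.
  beta_rewrite_r (antipodeR_sum (fun c => \sum_(u <- cop y.1) \sum_(z <- omega u.2)
    G z.1 z.2 (S u.1 * c))); last by linearity.
  by do 3! (apply: eq_bigr => ? _); rewrite mulrA.
beta_rewrite (counitR_sum (fun g => \sum_(u <- cop g) \sum_(z <- omega u.2)
  G z.1 z.2 (S u.1 * 1))); last by linearity.
by do 2! (apply: eq_bigr => ? _); rewrite mulr1.
Qed.

Lemma cond_iii_left_coaction h : cond_iii_at h -> left_coaction_at h.
Proof.
move=> Hiii G HG.
transitivity (\sum_(x <- omega h) \sum_(b <- coR x.2) \sum_(a <- coR x.1) \sum_(d <- coR b.1)
    G a.1 d.1 (a.2 * (d.2 * S b.2))).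
  apply: eq_bigr => x _; rewrite exchange_big; apply: eq_bigr => a _.
  rewrite -[in LHS](mulr1 a.2).
  by beta_rewrite (coR_antipode_sum (fun u g => G a.1 u (a.2 * g))); split; linearity.
beta_rewrite (Hiii (fun u v g => \sum_(a <- coR u) \sum_(d <- coR v)
  G a.1 d.1 (a.2 * (d.2 * S g)))); last by split; linearity.
have G11 g : \sum_(a <- coR 1) \sum_(d <- coR 1) G a.1 d.1 (a.2 * (d.2 * S g)) = G 1 1 (S g).
  beta_rewrite (coR1_sum (fun u c => \sum_(d <- coR 1) G u d.1 (c * (d.2 * S g))));
    last by split; linearity.
  beta_rewrite (coR1_sum (fun u c => G 1 u (1 * (c * S g)))); last by split; linearity.
  by rewrite !mul1r.
by rewrite !G11 omega_equivariant_antipode_sum.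
Qed.

Lemma cond_ii_left_coaction h : cond_ii_at h -> left_coaction_at h.
Proof.
move=> Hii G HG; rewrite -(Hii (fun a b c => G b c (S a))); last by split; linearity.
by do 2! (apply: eq_bigr => ? _); rewrite KS.
Qed.

Lemma left_coaction_cond_ii h : left_coaction_at h -> cond_ii_at h.
Proof.
move=> HF G HG; have Sinv_lin := Sinv_lin.
rewrite (HF (fun u v g => G (Sinv g) u v)); last by split; linearity.
by rewrite !SK; congr (_ + _); do 2! (apply: eq_bigr => ? _); rewrite SK.
Qed.

Lemma coR_antipode_counit_sum (F : P -> H -> k) p : bilin F ->
  \sum_(a <- coR p) \sum_(e <- cop a.2) F a.1 (e.1 * S (- (eps e.2)%:A)) =
  - \sum_(a <- coR p) F a.1 a.2.
Proof.
move=> HF; have [F1 F2] := HF; rewrite -sumrN; apply: eq_bigr => a _.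
transitivity (- \sum_(e <- cop a.2) eps e.2 * F a.1 e.1).
  rewrite -sumrN; apply: eq_bigr => e _.
  by rewrite antipodeN_alg mulrN mulr_algr (kformN (F2 _)) (kformZ (F2 _)).
by beta_rewrite (counitR_sum (fun g => F a.1 g)); linearity.
Qed.

Lemma omega_antipode_sum (G : P -> P -> H -> k) h : trilin G ->
  \sum_(e <- cop h) \sum_(y <- cop e.2) \sum_(z <- omega y.2) G z.1 z.2 (e.1 * S y.1) =
  \sum_(z <- omega h) G z.1 z.2 1.
Proof.
move=> HG.
rewrite -(coassoc_sum (fun g1 g2 g3 => \sum_(z <- omega g3) G z.1 z.2 (g1 * S g2)) h);
  last by split; linearity.
transitivity (\sum_(e <- cop h) eps e.1 * \sum_(z <- omega e.2) G z.1 z.2 1).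
  apply: eq_bigr => e _; rewrite exchange_big mulr_sumr; apply: eq_bigr => z _.
  by beta_rewrite (antipodeR_sum (fun c => G z.1 z.2 c)); linearity.
by beta_rewrite (counitL_sum (fun g => \sum_(z <- omega g) G z.1 z.2 1)); linearity.
Qed.

Lemma left_coaction_Pi_sum (G : P -> H -> P -> k) p :
  (forall h, left_coaction_at h) -> trilin G ->
  \sum_(a <- coR p) \sum_(z <- omega a.2) \sum_(b <- coR (a.1 * z.1)) G b.1 b.2 z.2 =
  G p 1 1 - \sum_(a <- coR p) G a.1 a.2 1 +
  \sum_(a <- coR p) \sum_(z <- omega a.2) G (a.1 * z.1) 1 z.2.
Proof.
move=> HF1 HG.
transitivity (\sum_(a <- coR p) \sum_(c <- coR a.1) \sum_(z <- omega a.2) \sum_(d <- coR z.1)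
    G (c.1 * d.1) (c.2 * d.2) z.2).
  apply: eq_bigr => a _; rewrite exchange_big; apply: eq_bigr => z _.
  by beta_rewrite (coRM_sum (fun u g => G u g z.2)); split; linearity.
rewrite (coR_coassoc_sum (fun u g1 g2 => \sum_(z <- omega g2) \sum_(d <- coR z.1)
  G (u * d.1) (g1 * d.2) z.2) p); last by split; linearity.
transitivity (\sum_(a <- coR p) \sum_(e <- cop a.2)
   (G a.1 (e.1 * S e.2) 1 + G a.1 (e.1 * S (- (eps e.2)%:A)) 1 +
    \sum_(y <- cop e.2) \sum_(z <- omega y.2) G (a.1 * z.1) (e.1 * S y.1) z.2)).
  apply: eq_bigr => a _; apply: eq_bigr => e _.
  beta_rewrite (HF1 e.2 (fun u v g => G (a.1 * u) (e.1 * g) v)); last by split; linearity.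
  by rewrite !mulr1.
under eq_bigr do rewrite !big_split /=.
rewrite !big_split /=.
beta_rewrite (coR_antipodeR_sum (fun u g => G u g 1)); last by split; linearity.
beta_rewrite (coR_antipode_counit_sum (fun u g => G u g 1)); last by split; linearity.
congr (_ + _); apply: eq_bigr => a _.
by beta_rewrite (omega_antipode_sum (fun u v g => G (a.1 * u) g v)); split; linearity.
Qed.

Lemma left_coaction_Dcov_invariant p :
  (forall h, left_coaction_at h) -> invariant_tensor coR 1 (Dcov p).
Proof.
move=> HF1 G HG.
beta_rewrite (Dcov_sum (fun u v => \sum_(a <- coR u) G a.1 a.2 v)); last by split; linearity.
beta_rewrite (Dcov_sum (fun u v => G u 1 v)); last by split; linearity.
beta_rewrite (coR1_sum (fun u g => G u g p)); last by split; linearity.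
rewrite left_coaction_Pi_sum //; ring.
Qed.

Lemma Dcov_invariant_left_strong p :
  invariant_tensor coR 1 (Dcov p) -> in_Omega1M_P coR (Dcov p).
Proof.
move=> /(invariant_tensor_legs coR_lin) [s [inv_s Ts]].
apply: (in_Omega1M_P_of_coinv _ s) => //; last exact: Dcov_in_Omega1.
by move=> x xs; apply/coinvP; apply: inv_s.
Qed.

Lemma coR2_Dcov_of_left_strong y (G : P -> P -> H -> k) :
  in_Omega1M_P coR (Dcov y) -> trilin G ->
  \sum_(t <- Dcov y) \sum_(b <- coR t.2) G t.1 b.1 b.2 =
  \sum_(t <- Dcov y) \sum_(a <- coR t.1) \sum_(b <- coR t.2) G a.1 b.1 (a.2 * b.2).
Proof.
move=> [s [Hs Ts]] HG.
rewrite (teq2E (B := fun u v => \sum_(b <- coR v) G u b.1 b.2) Ts); last by split; linearity.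
rewrite (teq2E (B := fun u v => \sum_(a <- coR u) \sum_(b <- coR v) G a.1 b.1 (a.2 * b.2)) Ts);
  last by split; linearity.
rewrite !big_allpairs_dep /=; apply: eq_big_seq => x xs; apply: eq_big_seq => a ax.
have [/(_ a ax) [/coinvP ca _] _] := Hs x xs.
beta_rewrite (ca (fun u g => \sum_(b <- coR (a.2 * x.2)) G u b.1 (g * b.2)));
  last by split; linearity.
by apply: eq_bigr => b _; rewrite mul1r.
Qed.

Lemma omega_coR2_twisted_sum (G : P -> P -> H -> k) h : trilin G ->
  \sum_(e <- cop h) \sum_(z <- omega e.2) \sum_(d <- coR z.1) \sum_(b <- coR z.2)
    G d.1 b.1 (e.1 * (d.2 * b.2)) =
  \sum_(u <- cop h) \sum_(z <- omega u.1) G z.1 z.2 u.2.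
Proof.
move=> HG.
transitivity (\sum_(e <- cop h) \sum_(w <- cop e.2) \sum_(v <- cop w.1) \sum_(z <- omega v.2)
    G z.1 z.2 (e.1 * (S v.1 * w.2))).
  apply: eq_bigr => e _.
  by beta_rewrite (omega_equivariant_sum (fun u v g => G u v (e.1 * g))); split; linearity.
transitivity (\sum_(e <- cop h) \sum_(w <- cop e.2) \sum_(v <- cop w.2) \sum_(z <- omega v.1)
    G z.1 z.2 (e.1 * (S w.1 * v.2))).
  apply: eq_bigr => e _.
  by rewrite (coassoc_sum (fun x y z => \sum_(z' <- omega y) G z'.1 z'.2 (e.1 * (S x * z))) e.2)
    //; split; linearity.
rewrite -(coassoc_sum (fun x y z => \sum_(v <- cop z) \sum_(z' <- omega v.1)
  G z'.1 z'.2 (x * (S y * v.2))) h); last by split; linearity.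
transitivity (\sum_(e <- cop h) eps e.1 * \sum_(v <- cop e.2) \sum_(z <- omega v.1)
    G z.1 z.2 (1 * v.2)).
  apply: eq_bigr => e _; rewrite exchange_big mulr_sumr; apply: eq_bigr => v _.
  rewrite exchange_big mulr_sumr; apply: eq_bigr => z _.
  beta_rewrite_r (antipodeR_sum (fun c => G z.1 z.2 (c * v.2))); last by linearity.
  by apply: eq_bigr => w _; rewrite mulrA.
beta_rewrite (counitL_sum (fun g => \sum_(v <- cop g) \sum_(z <- omega v.1)
  G z.1 z.2 (1 * v.2))); last by linearity.
by do 2! (apply: eq_bigr => ? _); rewrite mul1r.
Qed.

Lemma coR2_Dcov_sum y (G : P -> P -> H -> k) : trilin G ->
  \sum_(t <- Dcov y) \sum_(a <- coR t.1) \sum_(b <- coR t.2) G a.1 b.1 (a.2 * b.2) =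
  \sum_(b <- coR y) G 1 b.1 b.2 - \sum_(a <- coR y) G a.1 1 a.2 -
  \sum_(a <- coR y) \sum_(u <- cop a.2) \sum_(z <- omega u.1) G (a.1 * z.1) z.2 u.2.
Proof.
move=> HG.
beta_rewrite (Dcov_sum (fun u v => \sum_(a <- coR u) \sum_(b <- coR v) G a.1 b.1 (a.2 * b.2)));
  last by split; linearity.
congr (_ - _ - _).
- beta_rewrite (coR1_sum (fun u g => \sum_(b <- coR y) G u b.1 (g * b.2)));
    last by split; linearity.
  by apply: eq_bigr => b _; rewrite mul1r.
- apply: eq_bigr => a _.
  by beta_rewrite (coR1_sum (fun u g => G a.1 u (a.2 * g))); rewrite ?mulr1 //; split; linearity.
transitivity (\sum_(a <- coR y) \sum_(c <- coR a.1) \sum_(z <- omega a.2) \sum_(d <- coR z.1)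
    \sum_(b <- coR z.2) G (c.1 * d.1) b.1 (c.2 * d.2 * b.2)).
  apply: eq_bigr => a _; rewrite exchange_big; apply: eq_bigr => z _.
  by beta_rewrite (coRM_sum (fun u g => \sum_(b <- coR z.2) G u b.1 (g * b.2))); split; linearity.
rewrite (coR_coassoc_sum (fun u g1 g2 => \sum_(z <- omega g2) \sum_(d <- coR z.1)
  \sum_(b <- coR z.2) G (u * d.1) b.1 (g1 * d.2 * b.2)) y); last by split; linearity.
apply: eq_bigr => a _.
rewrite -(omega_coR2_twisted_sum (fun u v g => G (a.1 * u) v g)); last by split; linearity.
by do 4! (apply: eq_bigr => ? _); rewrite mulrA.
Qed.

Lemma left_strong_Pi_coR_sum y (G : P -> P -> H -> k) :
  in_Omega1M_P coR (Dcov y) -> trilin G ->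
  \sum_(c <- coR y) \sum_(z <- omega c.2) \sum_(a <- coR z.2) G (c.1 * z.1) a.1 a.2 =
  - G y 1 1 + \sum_(a <- coR y) G a.1 1 a.2 +
  \sum_(a <- coR y) \sum_(u <- cop a.2) \sum_(z <- omega u.1) G (a.1 * z.1) z.2 u.2.
Proof.
move=> lsy HG.
have B_lin : bilin (fun u v => \sum_(a <- coR v) G u a.1 a.2) by split; linearity.
have B1_lin : bilin (fun u g => G y u g) by split; linearity.
have E := Dcov_sum _ y B_lin; have E1 := coR1_sum _ B1_lin.
cbn beta in E1; cbn beta in E; rewrite coR2_Dcov_of_left_strong // coR2_Dcov_sum // E1 in E.
move/eqP: E; rewrite -subr_eq0 => /eqP E; apply/eqP; rewrite -subr_eq0; apply/eqP.
by rewrite -[RHS]E; ring.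
Qed.

Lemma left_strong_cond_iii h :
  (forall y, in_Omega1M_P coR (Dcov y)) ->
  (forall u : seq (P * H), exists t, teq2 (can coR t) u) -> cond_iii_at h.
Proof.
move=> ls can_onto G HG; have [G1 G2 G3] := HG.
have [t Ht] := can_onto [:: (1, h)].
have canE (B : P -> H -> k) : bilin B ->
    \sum_(x <- t) \sum_(a <- coR x.2) B (x.1 * a.1) a.2 = B 1 h.
  by move=> HB; have := teq2E Ht HB; rewrite /can big_allpairs_dep big_seq1.
transitivity (\sum_(x <- t) \sum_(c <- coR x.2) \sum_(z <- omega c.2) \sum_(a <- coR z.2)
    G (x.1 * (c.1 * z.1)) a.1 a.2).
  transitivity (\sum_(z <- omega h) \sum_(a <- coR z.2) G (1 * z.1) a.1 a.2).
    by apply: eq_bigr => z _; rewrite mul1r.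
  beta_rewrite_r (canE (fun u g => \sum_(z <- omega g) \sum_(a <- coR z.2) G (u * z.1) a.1 a.2));
    last by split; linearity.
  by do 3! (apply: eq_bigr => ? _); rewrite mulrA.
transitivity (\sum_(x <- t) (- G (x.1 * x.2) 1 1 + \sum_(a <- coR x.2) G (x.1 * a.1) 1 a.2 +
    \sum_(a <- coR x.2) \sum_(u <- cop a.2) \sum_(z <- omega u.1) G (x.1 * (a.1 * z.1)) z.2 u.2)).
  apply: eq_bigr => x _.
  by beta_rewrite (left_strong_Pi_coR_sum x.2 (fun u v g => G (x.1 * u) v g) (ls x.2));
    split; linearity.
rewrite !big_split /= sumrN.
have -> : \sum_(x <- t) G (x.1 * x.2) 1 1 = eps h * G 1 1 1.
  transitivity (\sum_(x <- t) \sum_(c <- coR x.2) eps c.2 * G (x.1 * c.1) 1 1).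
    by apply: eq_bigr => x _; symmetry; beta_rewrite (coR_counit_sum (fun q => G (x.1 * q) 1 1));
      linearity.
  by beta_rewrite (canE (fun u g => eps g * G u 1 1)); split; linearity.
beta_rewrite (canE (fun u g => G u 1 g)); last by split; linearity.
have -> : \sum_(x <- t) \sum_(a <- coR x.2) \sum_(u <- cop a.2) \sum_(z <- omega u.1)
    G (x.1 * (a.1 * z.1)) z.2 u.2 = \sum_(u <- cop h) \sum_(z <- omega u.1) G z.1 z.2 u.2.
  transitivity (\sum_(x <- t) \sum_(a <- coR x.2) \sum_(u <- cop a.2) \sum_(z <- omega u.1)
      G (x.1 * a.1 * z.1) z.2 u.2).
    by do 4! (apply: eq_bigr => ? _); rewrite mulrA.
  beta_rewrite (canE (fun v g => \sum_(u <- cop g) \sum_(z <- omega u.1) G (v * z.1) z.2 u.2));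
    last by split; linearity.
  by do 2! (apply: eq_bigr => ? _); rewrite mul1r.
rewrite (kformN (G3 _ _)) (kformZ (G3 _ _)); ring.
Qed.

Lemma coR_antipode_inv_sum (F : P -> H -> k) p : bilin F ->
  \sum_(y <- coR p) \sum_(d <- coR y.1) F d.1 (Sinv y.2 * d.2) = F p 1.
Proof.
move=> HF; have [F1 F2] := HF; have Sinv_lin := Sinv_lin.
rewrite (coR_coassoc_sum (fun u g1 g2 => F u (Sinv g2 * g1))); last by split; linearity.
transitivity (\sum_(y <- coR p) eps y.2 * F y.1 1).
  apply: eq_bigr => y _.
  by rewrite -(kform_sum _ _ (F2 _)) antipode_inv_sum (kformZ (F2 _)).
by beta_rewrite (coR_counit_sum (fun u => F u 1)); linearity.
Qed.

Lemma coR_counit_inv_sum (F : P -> H -> k) p : bilin F ->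
  \sum_(y <- coR p) \sum_(d <- coR y.1) F d.1 (- (eps (Sinv y.2))%:A * d.2) =
  - \sum_(d <- coR p) F d.1 d.2.
Proof.
move=> HF; have [F1 F2] := HF.
transitivity (- \sum_(y <- coR p) eps y.2 * \sum_(d <- coR y.1) F d.1 d.2).
  rewrite -sumrN; apply: eq_bigr => y _; rewrite mulr_sumr -sumrN; apply: eq_bigr => d _.
  by rewrite eps_antipode_inv mulNr mulr_algl (kformN (F2 _)) (kformZ (F2 _)).
by beta_rewrite (coR_counit_sum (fun q => \sum_(d <- coR q) F d.1 d.2)); linearity.
Qed.

Lemma omega_antipode_inv_sum (G : P -> H -> P -> k) p : trilin G ->
  \sum_(y <- coR p) \sum_(e <- cop (Sinv y.2)) \sum_(z <- omega e.1) \sum_(d <- coR y.1)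
    G (z.2 * d.1) (e.2 * d.2) z.1 =
  \sum_(y <- coR p) \sum_(z <- omega (Sinv y.2)) G (z.2 * y.1) 1 z.1.
Proof.
move=> HG; have Sinv_lin := Sinv_lin.
transitivity (\sum_(y <- coR p) \sum_(e <- cop y.2) \sum_(z <- omega (Sinv e.2))
    \sum_(d <- coR y.1) G (z.2 * d.1) (Sinv e.1 * d.2) z.1).
  apply: eq_bigr => y _.
  by beta_rewrite (cop_antipode_inv (fun g1 g2 => \sum_(z <- omega g1) \sum_(d <- coR y.1)
    G (z.2 * d.1) (g2 * d.2) z.1) y.2); split; linearity.
rewrite -(coR_coassoc_sum (fun q g1 g2 => \sum_(z <- omega (Sinv g2)) \sum_(d <- coR q)
  G (z.2 * d.1) (Sinv g1 * d.2) z.1) p); last by split; linearity.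
apply: eq_bigr => y _; rewrite exchange_big; apply: eq_bigr => z _.
by beta_rewrite (coR_antipode_inv_sum (fun u g => G (z.2 * u) g z.1)); split; linearity.
Qed.

Lemma cond_iii_Pibar_sum (G : P -> H -> P -> k) p :
  (forall h, cond_iii_at h) -> trilin G ->
  \sum_(y <- coR p) \sum_(z <- omega (Sinv y.2)) \sum_(a <- coR (z.2 * y.1)) G a.1 a.2 z.1 =
  G p 1 1 - \sum_(d <- coR p) G d.1 d.2 1 +
  \sum_(y <- coR p) \sum_(z <- omega (Sinv y.2)) G (z.2 * y.1) 1 z.1.
Proof.
move=> Hiii HG; have Sinv_lin := Sinv_lin.
transitivity (\sum_(y <- coR p)
   (\sum_(d <- coR y.1) G d.1 (Sinv y.2 * d.2) 1 +
    \sum_(d <- coR y.1) G d.1 (- (eps (Sinv y.2))%:A * d.2) 1 +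
    \sum_(e <- cop (Sinv y.2)) \sum_(z <- omega e.1) \sum_(d <- coR y.1)
      G (z.2 * d.1) (e.2 * d.2) z.1)).
  apply: eq_bigr => y _.
  transitivity (\sum_(z <- omega (Sinv y.2)) \sum_(c <- coR z.2) \sum_(d <- coR y.1)
      G (c.1 * d.1) (c.2 * d.2) z.1).
    apply: eq_bigr => z _.
    by beta_rewrite (coRM_sum (fun u g => G u g z.1)); split; linearity.
  beta_rewrite (Hiii (Sinv y.2) (fun u v g => \sum_(d <- coR y.1) G (v * d.1) (g * d.2) u));
    last by split; linearity.
  by under eq_bigr do rewrite mul1r; under [X in _ + X + _ = _]eq_bigr do rewrite mul1r.

rewrite !big_split /= omega_antipode_inv_sum //.
beta_rewrite (coR_antipode_inv_sum (fun u g => G u g 1)); last by split; linearity.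
by beta_rewrite (coR_counit_inv_sum (fun u g => G u g 1)); last by split; linearity.
Qed.

Lemma cond_iii_Dcovbar_invariant p :
  (forall h, cond_iii_at h) -> invariant_tensor coR 1 [seq (x.2, x.1) | x <- Dcovbar p].
Proof.
move=> Hiii G HG; rewrite !big_map /=; have Sinv_lin := Sinv_lin.
beta_rewrite (Dcovbar_sum (fun u v => \sum_(a <- coR v) G a.1 a.2 u)); last by split; linearity.
beta_rewrite (Dcovbar_sum (fun u v => G v 1 u)); last by split; linearity.
beta_rewrite (coR1_sum (fun u g => G u g p)); last by split; linearity.
rewrite cond_iii_Pibar_sum //; ring.
Qed.

Lemma Dcovbar_invariant_right_strong p :
  invariant_tensor coR 1 [seq (x.2, x.1) | x <- Dcovbar p] -> in_P_Omega1M coR (Dcovbar p).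
Proof.
move=> /(invariant_tensor_legs coR_lin) [s [inv_s Ts]].
apply: (in_P_Omega1M_of_coinv _ [seq (m.2, m.1) | m <- s]); last exact: Dcovbar_in_Omega1.
  by move=> _ /mapP [m ms ->]; apply/coinvP; apply: inv_s.
apply/teq2P => B [B1 B2]; rewrite big_map.
by have := teq2E (B := fun u v => B v u) Ts; rewrite big_map /= => -> //; split; linearity.
Qed.

Lemma left_strong_iff_cond_ii :
  (forall u : seq (P * H), exists t, teq2 (can coR t) u) ->
  left_strong coR omega <-> cond_ii cop eps Sinv coR omega.
Proof.
move=> can_onto; rewrite cond_iiP; split=> [ls h | Hii p].
  exact/left_coaction_cond_ii/cond_iii_left_coaction/left_strong_cond_iii.
apply/Dcov_invariant_left_strong/left_coaction_Dcov_invariant => h.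
exact: cond_ii_left_coaction.
Qed.

Lemma left_strong_iff_cond_iii :
  (forall u : seq (P * H), exists t, teq2 (can coR t) u) ->
  left_strong coR omega <-> cond_iii cop eps coR omega.
Proof.
move=> can_onto; rewrite cond_iiiP; split=> [ls h | Hiii p].
  exact: left_strong_cond_iii.
apply/Dcov_invariant_left_strong/left_coaction_Dcov_invariant => h.
exact: cond_iii_left_coaction.
Qed.

Lemma left_strong_right_strong_bar :
  (forall u : seq (P * H), exists t, teq2 (can coR t) u) ->
  left_strong coR omega -> right_strong_bar Sinv coR omega.
Proof.
move=> can_onto ls p; apply/Dcovbar_invariant_right_strong/cond_iii_Dcovbar_invariant => h.
exact: left_strong_cond_iii.
Qed.

End Bundle.

End HopfAlgebra.

Theorem proposition3p4 (k : fieldType) (H P : algType k)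
    (cop : H -> seq (H * H)) (eps : H -> k) (S Sinv : H -> H)
    (coR : P -> seq (P * H)) (omega : H -> seq (P * P)) :
  is_qpb cop eps S Sinv coR ->
  is_connection cop eps S coR omega ->
  [/\ left_strong coR omega <-> cond_ii cop eps Sinv coR omega,
      left_strong coR omega <-> cond_iii cop eps coR omega &
      left_strong coR omega -> right_strong_bar Sinv coR omega].
Proof.
move=> [[[[cop_lin eps_lin S_lin] [[coassoc counitL counitR copM cop1]
          [epsM eps1 antipodeL antipodeR]]] SK KS]
        [[coR_lin coR_coassoc coR_counit coRM coR1] _ can_onto _]].
move=> [omega_lin omega1 omega_Omega1 _ omega_equivariant].
by split; [apply: left_strong_iff_cond_ii | apply: left_strong_iff_cond_iii
          | apply: left_strong_right_strong_bar].
Qed.
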